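(* Let $(\mathbf{P}_t)_{t\ge0}$ be a continuous-time Markov process on a countable state space $\mathcal{S}$ with stable conservative $Q$-matrix, and suppose it is reversible with respect to a positive measure $\mu$ on $\mathcal{S}$ (i.e. $\mu_ip_{ij}(t)=\mu_jp_{ji}(t)$ for all $i,j,t$). Then it is initial-state identifiable: for every $t\in[0,\infty)$, the rows $\mathbf{p}^i(t)$, $i\in\mathcal{S}$, of $\mathbf{P}_t$ are pairwise distinct.
   Context: $\mathbf{P}_t=(p_{ij}(t))$ is the transition matrix at time $t$ and $\mathbf{p}^i(t)=(p_{i1}(t),p_{i2}(t),\dots)$ its $i$-th row. Stable conservative $Q$-matrix: $q_{ij}=p'_{ij}(0)\in[0,\infty)$ for $i\ne j$ and $q_i=-q_{ii}=\sum_{j\ne i}q_{ij}<\infty$. *)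

From Stdlib Require Import Reals List.
Import ListNotations.
Open Scope R_scope.

Definition list_sumR (l : list R) : R := fold_right Rplus 0 l.

(* All sums in
   the statement are of nonnegative terms, so this is the usual sum over a
   countable index set (with value in [0,oo), finiteness being asserted). *)
Definition sums_on {S : Type} (P : S -> Prop) (f : S -> R) (s : R) : Prop :=
  is_lub (fun x => exists L : list S,
             NoDup L /\ Forall P L /\ x = list_sumR (map f L)) s.

Definition sums {S : Type} (f : S -> R) (s : R) : Prop :=
  sums_on (fun _ => True) f s.

Definition countable (S : Type) : Prop :=
  exists enc : S -> nat, forall x y, enc x = enc y -> x = y.

Definition transition_function {S : Type} (p : R -> S -> S -> R) : Prop :=
  (forall t i j, 0 <= t -> 0 <= p t i j) /\
  (forall t i, 0 <= t -> sums (fun j => p t i j) 1) /\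
  (forall i, p 0 i i = 1) /\
  (forall i j, i <> j -> p 0 i j = 0) /\
  (forall s t i j, 0 <= s -> 0 <= t ->
      sums (fun k => p s i k * p t k j) (p (s + t) i j)).

Definition right_deriv0 (g : R -> R) (l : R) : Prop :=
  forall eps, 0 < eps -> exists delta, 0 < delta /\
    forall h, 0 < h < delta -> Rabs ((g h - g 0) / h - l) < eps.

Definition stable_conservative_Qmatrix {S : Type}
    (p : R -> S -> S -> R) (q : S -> S -> R) : Prop :=
  (forall i j, right_deriv0 (fun t => p t i j) (q i j)) /\
  (forall i j, i <> j -> 0 <= q i j) /\
  (forall i, sums_on (fun j => j <> i) (fun j => q i j) (- q i i)).

Definition reversible {S : Type} (p : R -> S -> S -> R) (mu : S -> R) : Prop :=
  (forall i, 0 < mu i) /\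
  (forall t i j, 0 <= t -> mu i * p t i j = mu j * p t j i).

(* Reversibility turns the Chapman-Kolmogorov sums into an L^2(1/mu) identity:
   sum_k (p_s(i,k) - p_s(j,k))^2 / mu_k
     = p_2s(i,i)/mu_i - 2 p_2s(i,j)/mu_j + p_2s(j,j)/mu_j,
   and the right-hand side vanishes when rows i and j of P_2s coincide.  Hence
   equal rows at time t stay equal at every time t/2^n.  Letting n -> oo,
   continuity of P at 0 (a consequence of the existence of the Q-matrix)
   gives p_0(i,i) = p_0(j,i), contradicting P_0 = I. *)
From Stdlib Require Import Reals Lra List Classical.
Import ListNotations.
Open Scope R_scope.

Lemma list_sumR_map_lin {S : Type} (a b : R) (f g : S -> R) (L : list S) :
  list_sumR (map (fun k => a * f k + b * g k) L) =
  a * list_sumR (map f L) + b * list_sumR (map g L).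
Proof. induction L; simpl; [ring | rewrite IHL; ring]. Qed.

Lemma list_sumR_map_nonneg {S : Type} (f : S -> R) (L : list S) :
  (forall x, 0 <= f x) -> 0 <= list_sumR (map f L).
Proof. intros Hf; induction L; simpl; [lra | specialize (Hf a); lra]. Qed.

Lemma list_sumR_map_ge_elem {S : Type} (f : S -> R) (L : list S) (k : S) :
  (forall x, 0 <= f x) -> In k L -> f k <= list_sumR (map f L).
Proof.
  intros Hf; induction L as [|a L IH]; simpl; [tauto|].
  intros [->|Hin].
  - pose proof (list_sumR_map_nonneg f L Hf); lra.
  - specialize (IH Hin); specialize (Hf a); lra.
Qed.

Lemma sums_ub {S : Type} (f : S -> R) (s : R) (L : list S) :
  sums f s -> NoDup L -> list_sumR (map f L) <= s.
Proof.
  intros [Hub _] HL; apply Hub; exists L.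
  repeat split; auto; apply Forall_forall; auto.
Qed.

Lemma sums_approx {S : Type} (f : S -> R) (s eps : R) :
  sums f s -> 0 < eps -> exists L, NoDup L /\ s - eps < list_sumR (map f L).
Proof.
  intros [_ Hlub] He; apply NNPP; intro Hn.
  enough (s <= s - eps) by lra.
  apply Hlub; intros x [L [HL [_ ->]]].
  apply Rnot_lt_le; intro Hc; apply Hn; exists L; auto.
Qed.

Lemma sums_approx_containing {S : Type} (f : S -> R) (s eps : R) (k : S) :
  (forall x, 0 <= f x) -> sums f s -> 0 < eps ->
  exists L, NoDup L /\ In k L /\ s - eps < list_sumR (map f L).
Proof.
  intros Hf Hs He.
  destruct (sums_approx f s eps Hs He) as [L [HL HLs]].
  destruct (classic (In k L)) as [Hk|Hk].
  - now exists L.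
  - exists (k :: L); repeat split; [now constructor | now left |].
    simpl; specialize (Hf k); lra.
Qed.

(* Approximate [sw] by a finite sum that contains the term [k]. *)
Lemma term_le_of_sums_diff {S : Type} (F u w : S -> R) (beta su sw : R) (k : S) :
  (forall x, 0 <= F x) -> (forall x, 0 <= w x) -> 0 < beta ->
  (forall x, F x = u x - beta * w x) ->
  (forall L, NoDup L -> list_sumR (map u L) <= su) ->
  sums w sw -> F k <= su - beta * sw.
Proof.
  intros HF Hw Hbeta HFuw Hu Hsw.
  apply Rnot_lt_le; intro Hlt.
  set (eps := (F k - (su - beta * sw)) / 2).
  assert (Heps : 0 < eps / beta) by (apply Rdiv_lt_0_compat; unfold eps; lra).
  destruct (sums_approx_containing w sw (eps / beta) k Hw Hsw Heps)
    as [L [HL [Hk HLw]]].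
  pose proof (list_sumR_map_ge_elem F L k HF Hk) as HFk.
  replace (map F L) with (map (fun x => 1 * u x + - beta * w x) L) in HFk
    by (apply map_ext; intro x; rewrite HFuw; ring).
  rewrite list_sumR_map_lin in HFk.
  specialize (Hu L HL).
  assert (beta * (sw - eps / beta) <= beta * list_sumR (map w L))
    by (apply Rmult_le_compat_l; lra).
  replace (beta * (sw - eps / beta)) with (beta * sw - eps) in * by (field; lra).
  unfold eps in *; lra.
Qed.

Section Reversible.

Variables (S : Type) (p : R -> S -> S -> R) (mu : S -> R).
Hypothesis p_nonneg : forall t i j, 0 <= t -> 0 <= p t i j.
Hypothesis p_chapman_kolmogorov : forall s t i j, 0 <= s -> 0 <= t ->
  sums (fun k => p s i k * p t k j) (p (s + t) i j).
Hypothesis mu_pos : forall i, 0 < mu i.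
Hypothesis p_reversible : forall t i j, 0 <= t -> mu i * p t i j = mu j * p t j i.

Lemma sq_row_diff_reversible (s : R) (i j k : S) : 0 <= s ->
  (p s i k - p s j k) ^ 2 / mu k =
  / mu i * (p s i k * p s k i) + / mu j * (p s j k * p s k j)
  - 2 / mu j * (p s i k * p s k j).
Proof.
  intros Hs.
  pose proof (mu_pos i); pose proof (mu_pos j); pose proof (mu_pos k).
  assert (p s k i = mu i * p s i k / mu k) as ->
    by (rewrite <- p_reversible by exact Hs; field; lra).
  assert (p s k j = mu j * p s j k / mu k) as ->
    by (rewrite <- p_reversible by exact Hs; field; lra).
  field; lra.
Qed.

Lemma rows_eq_half (s : R) (i j : S) : 0 <= s ->
  (forall k, p (s + s) i k = p (s + s) j k) -> forall k, p s i k = p s j k.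
Proof.
  intros Hs Hrow k.
  pose proof (mu_pos i); pose proof (mu_pos j).
  set (F := fun x => (p s i x - p s j x) ^ 2 / mu x).
  assert (HF : forall x, 0 <= F x).
  { intro x; pose proof (mu_pos x).
    apply Rmult_le_pos; [apply pow2_ge_0 | left; apply Rinv_0_lt_compat; lra]. }
  assert (Hnn : forall a b x, 0 <= p s a x * p s x b)
    by (intros; apply Rmult_le_pos; auto).
  assert (HFk : F k <= / mu i * p (s + s) i i + / mu j * p (s + s) j j
                       - 2 / mu j * p (s + s) i j).
  { apply (term_le_of_sums_diff F
      (fun x => / mu i * (p s i x * p s x i) + / mu j * (p s j x * p s x j))
      (fun x => p s i x * p s x j)); auto.
    - apply Rdiv_lt_0_compat; lra.
    - intro x; apply sq_row_diff_reversible; exact Hs.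
    - intros L HL; rewrite list_sumR_map_lin.
      pose proof (sums_ub _ _ L (p_chapman_kolmogorov s s i i Hs Hs) HL).
      pose proof (sums_ub _ _ L (p_chapman_kolmogorov s s j j Hs Hs) HL).
      apply Rplus_le_compat; apply Rmult_le_compat_l; auto;
        apply Rlt_le, Rinv_0_lt_compat; lra. }
  (* Equal rows at 2s give p_2s(i,i) = p_2s(j,i) = mu_i p_2s(i,j) / mu_j. *)
  assert (Hii : p (s + s) i i = mu i * p (s + s) i j / mu j).
  { rewrite Hrow, <- p_reversible by lra; field; lra. }
  rewrite Hii, <- (Hrow j) in HFk.
  replace (/ mu i * (mu i * p (s + s) i j / mu j) + / mu j * p (s + s) i j
           - 2 / mu j * p (s + s) i j) with 0 in HFk by (field; lra).
  pose proof (mu_pos k); pose proof (HF k).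
  assert (Hsq : (p s i k - p s j k) ^ 2 = 0).
  { assert (F k = 0) as HF0 by lra.
    replace ((p s i k - p s j k) ^ 2) with (F k * mu k) by (unfold F; field; lra).
    rewrite HF0; ring. }
  nra.
Qed.

Lemma rows_eq_dyadic (t : R) (i j : S) : 0 <= t ->
  (forall k, p t i k = p t j k) -> forall n k, p (t / 2 ^ n) i k = p (t / 2 ^ n) j k.
Proof.
  intros Ht Hrow n; induction n as [|n IH].
  - intro k; replace (t / 2 ^ 0) with t by (simpl; field); auto.
  - apply rows_eq_half.
    + apply Rmult_le_pos; [lra | left; apply Rinv_0_lt_compat, pow_lt; lra].
    + replace (t / 2 ^ Datatypes.S n + t / 2 ^ Datatypes.S n) with (t / 2 ^ n);
        [exact IH | simpl; field; apply pow_nonzero; lra].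
Qed.

End Reversible.

Lemma right_deriv0_right_continuous (g : R -> R) (l : R) :
  right_deriv0 g l -> forall eps, 0 < eps ->
  exists delta, 0 < delta /\ forall h, 0 < h < delta -> Rabs (g h - g 0) < eps.
Proof.
  intros Hd eps Heps.
  destruct (Hd 1 ltac:(lra)) as [d0 [Hd0 Hquot]].
  pose proof (Rabs_pos l).
  set (m := 1 + Rabs l).
  exists (Rmin d0 (eps / m)); split.
  - apply Rmin_glb_lt; auto; apply Rdiv_lt_0_compat; unfold m; lra.
  - intros h [Hh0 Hhd].
    pose proof (Rmin_l d0 (eps / m)); pose proof (Rmin_r d0 (eps / m)).
    specialize (Hquot h ltac:(lra)).
    set (u := (g h - g 0) / h) in Hquot.
    replace (g h - g 0) with (u * h) by (unfold u; field; lra).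
    rewrite Rabs_mult, (Rabs_right h) by lra.
    assert (Hu : Rabs u < m).
    { pose proof (Rabs_triang (u - l) l) as Htri.
      replace (u - l + l) with u in Htri by ring; unfold m; lra. }
    assert (Hhm : h * m < eps).
    { assert (Hm : 0 < m) by (unfold m; lra).
      replace eps with (eps / m * m) by (field; lra).
      apply Rmult_lt_compat_r; lra. }
    pose proof (Rabs_pos u); nra.
Qed.

Lemma dyadic_lt (t d : R) : 0 < d -> exists n, t / 2 ^ n < d.
Proof.
  intros Hd.
  destruct (Rle_or_lt t 0) as [Ht|Ht].
  { exists O; simpl; lra. }
  destruct (pow_lt_1_zero (/ 2) ltac:(rewrite Rabs_right; lra) (d / t)
              ltac:(apply Rdiv_lt_0_compat; lra)) as [N HN].
  exists N; specialize (HN N (le_n N)).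
  rewrite Rabs_right in HN by (apply Rle_ge, pow_le; lra).
  rewrite pow_inv in HN.
  apply (Rmult_lt_compat_l t) in HN; [| lra].
  replace (t * (d / t)) with d in HN by (field; lra).
  exact HN.
Qed.

Theorem mainTheorem11 (S : Type) (p : R -> S -> S -> R) (q : S -> S -> R)
    (mu : S -> R) :
  countable S ->
  transition_function p ->
  stable_conservative_Qmatrix p q ->
  reversible p mu ->
  forall t, 0 <= t -> forall i j : S, i <> j ->
    (fun k => p t i k) <> (fun k => p t j k).
Proof.
  intros _ [Hnn [_ [Hdiag [Hoff HCK]]]] [Hq _] [Hmu Hrev] t Ht i j Hij Heq.
  pose proof (fun k => f_equal (fun f => f k) Heq) as Hrow; simpl in Hrow.
  destruct (right_deriv0_right_continuous _ _ (Hq i i) (1 / 2) ltac:(lra))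
    as [d1 [Hd1 Hii]].
  destruct (right_deriv0_right_continuous _ _ (Hq j i) (1 / 2) ltac:(lra))
    as [d2 [Hd2 Hji]].
  destruct (dyadic_lt t (Rmin d1 d2) ltac:(now apply Rmin_glb_lt)) as [n Hn].
  pose proof (rows_eq_dyadic S p mu Hnn HCK Hmu Hrev t i j Ht Hrow n i) as Hdy.
  set (h := t / 2 ^ n) in *.
  assert (Hh : 0 <= h)
    by (apply Rmult_le_pos; [lra | left; apply Rinv_0_lt_compat, pow_lt; lra]).
  rewrite Hdiag in Hii; rewrite (Hoff j i (not_eq_sym Hij)) in Hji.
  destruct (Rle_lt_or_eq_dec 0 h Hh) as [Hhpos|Hh0].
  - pose proof (Rmin_l d1 d2); pose proof (Rmin_r d1 d2).
    specialize (Hii h ltac:(lra)); specialize (Hji h ltac:(lra)).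
    rewrite Hdy in Hii.
    apply Rabs_def2 in Hii; apply Rabs_def2 in Hji; lra.
  - rewrite <- Hh0, Hdiag, (Hoff j i (not_eq_sym Hij)) in Hdy; lra.
Qed.
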